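(* Let $n\ge1$, let $k,k'$ be divisors of $n$, and let $\mathbf{S}=\mathbf{P\L}_k\times\mathbf{P\L}_{k'}$. (1) Let $\mathbf{R}$ be a subalgebra of $\mathbf{P\L}_n\times\mathbf{P\L}_n$ satisfying: - $\mathbf{R}\subseteq{\le}$; - $\mathbf{R}$ is not the diagonal of a subalgebra of $\mathbf{P\L}_n$; - $\mathrm{pr}_1(\mathbf{R})\times\mathrm{pr}_2(\mathbf{R})=\mathbf{S}$. For each $i=0,\dots,k$ let $y_i$ be the least element of $\mathbf{P\L}_{k'}$ with $(\tfrac ik,y_i)\in\mathbf{R}$. Such $y_i$ exists, $y_0=0$ and $y_k=1$, and $$\mathbf{R}=\bigcup_{i=0}^k C_{(\frac ik,y_i),\mathbf{S}}.$$ (2) Let $y_0\le y_1\le\dots\le y_k$ be elements of $\mathbf{P\L}_{k'}$ with $y_0=0$, $y_k=1$ and $\tfrac ik\le y_i$ for $i=1,\dots,k-1$. Put $\mathbf{R}=\bigcup_{i=0}^k C_{(\frac ik,y_i),\mathbf{S}}$. Then $\mathbf{R}$ is a subuniverse of $\mathbf{S}$ if and only if $$(\tfrac ik,y_i)\odot(\tfrac jk,y_j)\in\mathbf{R}\quad\text{and}\quad(\tfrac ik,y_i)\oplus(\tfrac jk,y_j)\in\mathbf{R}$$ for all $i,j\in\{1,\dots,k-1\}$. Here the operations are computed componentwise.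
   Context: For $n\ge 1$, the algebra $\mathbf{P\L}_n=\langle\{0,\tfrac1n,\dots,\tfrac{n-1}{n},1\},\wedge,\vee,\odot,\oplus,0,1\rangle$ has $\wedge=\min$, $\vee=\max$, $x\odot y=\max\{0,x+y-1\}$ and $x\oplus y=\min\{1,x+y\}$. For a divisor $k$ of $n$, $\mathbf{P\L}_k$ denotes the subalgebra of $\mathbf{P\L}_n$ with universe $\{\tfrac ik:0\le i\le k\}$. The order is ${\le}=\{(x,y): x\le y\}\subseteq\mathbf{P\L}_n^2$. For a product $\mathbf{S}$ of two subalgebras of $\mathbf{P\L}_n$ and $(x,y)\in\mathbf{S}$ with $x\le y$, define $$C_{(x,y),\mathbf{S}}=\{(x',y')\in \mathbf{S}: x'\le x,\ y\le y'\}.$$ *)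

From mathcomp Require Import all_boot all_order all_algebra.
Set Implicit Arguments. Unset Strict Implicit. Unset Printing Implicit Defensive.
Import Order.TTheory GRing.Theory Num.Theory.
Local Open Scope ring_scope.

(* Elements of PL_n are represented as rationals in [0,1]. *)

Definition inPL (n : nat) (x : rat) : Prop :=
  exists i : nat, (i <= n)%N /\ x = i%:R / n%:R.

Definition lmeet (x y : rat) : rat := Num.min x y.
Definition ljoin (x y : rat) : rat := Num.max x y.
Definition lodot (x y : rat) : rat := Num.max 0 (x + y - 1).
Definition loplus (x y : rat) : rat := Num.min 1 (x + y).

Definition pmeet (p q : rat * rat) := (lmeet p.1 q.1, lmeet p.2 q.2).
Definition pjoin (p q : rat * rat) := (ljoin p.1 q.1, ljoin p.2 q.2).
Definition podot (p q : rat * rat) := (lodot p.1 q.1, lodot p.2 q.2).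
Definition poplus (p q : rat * rat) := (loplus p.1 q.1, loplus p.2 q.2).

Definition subuniv1 (U A : rat -> Prop) : Prop :=
  (forall x, A x -> U x) /\ A 0 /\ A 1 /\
  (forall x y, A x -> A y ->
     [/\ A (lmeet x y), A (ljoin x y), A (lodot x y) & A (loplus x y)]).

Definition subuniv2 (U R : rat * rat -> Prop) : Prop :=
  (forall p, R p -> U p) /\ R (0, 0) /\ R (1, 1) /\
  (forall p q, R p -> R q ->
     [/\ R (pmeet p q), R (pjoin p q), R (podot p q) & R (poplus p q)]).

Definition prodPL (k k' : nat) (p : rat * rat) : Prop := inPL k p.1 /\ inPL k' p.2.

Definition Cset (S : rat * rat -> Prop) (x y : rat) (p : rat * rat) : Prop :=
  S p /\ p.1 <= x /\ y <= p.2.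

Definition Cunion (S : rat * rat -> Prop) (k : nat) (y : nat -> rat)
  (p : rat * rat) : Prop :=
  exists2 i : nat, (i <= k)%N & Cset S (i%:R / k%:R) (y i) p.

(* A subalgebra R of PL_n^2 that lies below the diagonal order and is not itself
   diagonal contains a pair (i/n, j/n) with i < j; doubling (x ⊕ x) or squaring
   (x ⊙ x) strictly widens the gap j - i, so R contains (0, 1).  Meeting and
   joining with (0, 1) and with elements of the full projections shows that R is
   closed downwards in the first and upwards in the second coordinate inside S,
   hence R is the union of the cones at the pairs (i/k, y_i) with y_i least.
   Conversely, all four operations are monotone, so a union of such cones is
   closed under an operation as soon as it contains its values on the generators
   (i/k, y_i).  For ∧ and ∨ this follows from the monotonicity of y; the
   generators (0, 0) and (1, 1) are neutral or absorbing for ⊙ and ⊕, which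
   leaves exactly the inner pairs. *)
From Stdlib Require Import Classical ClassicalEpsilon Wf_nat.
From mathcomp Require Import all_boot all_order all_algebra.
From mathcomp Require Import zify ring lra.
Import Order.TTheory GRing.Theory Num.Theory.
Set Implicit Arguments. Unset Strict Implicit. Unset Printing Implicit Defensive.
Local Open Scope ring_scope.

Lemma inPL_bound m x : inPL m x -> 0 <= x <= 1.
Proof.
case=> i [le_im ->]; case: m le_im => [|m] le_im.
  by rewrite invr0 mulr0 lexx ler01.
by rewrite divr_ge0 //= ler_pdivrMr ?ltr0n // mul1r ler_nat.
Qed.

Lemma inPL0 m : inPL m 0.
Proof. by exists 0%N; rewrite mul0r. Qed.

Section Fractions.
Variable m : nat.
Hypothesis m_gt0 : (0 < m)%N.

Lemma ler_frac a b : ((a%:R / m%:R : rat) <= b%:R / m%:R) = (a <= b)%N.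
Proof. by rewrite ler_pM2r ?ler_nat // invr_gt0 ltr0n. Qed.

Lemma ltr_frac a b : ((a%:R / m%:R : rat) < b%:R / m%:R) = (a < b)%N.
Proof. by rewrite ltr_pM2r ?ltr_nat // invr_gt0 ltr0n. Qed.

Lemma frac_id : m%:R / m%:R = 1 :> rat.
Proof. by rewrite divff // pnatr_eq0 -lt0n. Qed.

Lemma lmeet_frac a b :
  lmeet (a%:R / m%:R) (b%:R / m%:R) = (minn a b)%:R / m%:R.
Proof.
rewrite /lmeet; case: (leqP a b) => [le_ab|lt_ba].
  by rewrite min_l ?ler_frac // (minn_idPl le_ab).
by rewrite min_r ?ler_frac ?(ltnW lt_ba) // (minn_idPr (ltnW lt_ba)).
Qed.

Lemma ljoin_frac a b :
  ljoin (a%:R / m%:R) (b%:R / m%:R) = (maxn a b)%:R / m%:R.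
Proof.
rewrite /ljoin; case: (leqP a b) => [le_ab|lt_ba].
  by rewrite max_r ?ler_frac // (maxn_idPr le_ab).
by rewrite max_l ?ler_frac ?(ltnW lt_ba) // (maxn_idPl (ltnW lt_ba)).
Qed.

(* [-] on [nat] is truncated, which matches the cut-off at 0 in [lodot]. *)
Lemma lodot_frac a b :
  lodot (a%:R / m%:R) (b%:R / m%:R) = (a + b - m)%N%:R / m%:R.
Proof.
rewrite /lodot.
have -> : a%:R / m%:R + b%:R / m%:R - 1 = ((a + b)%:R - m%:R) / m%:R :> rat.
  by rewrite natrD; field; rewrite pnatr_eq0 -lt0n.
case: (leqP m (a + b)) => [le_m_ab|lt_ab_m].
  by rewrite natrB // max_r // divr_ge0 // subr_ge0 ler_nat.
rewrite (_ : (a + b - m)%N = 0%N); last lia.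
rewrite mul0r max_l // pmulr_lle0 ?invr_gt0 ?ltr0n // subr_le0 ler_nat; lia.
Qed.

Lemma loplus_frac a b :
  loplus (a%:R / m%:R) (b%:R / m%:R) = (minn m (a + b))%:R / m%:R.
Proof. by rewrite /loplus -mulrDl -natrD -{1}frac_id -lmeet_frac. Qed.

Lemma inPL_frac i : (i <= m)%N -> inPL m (i%:R / m%:R).
Proof. by exists i. Qed.

Lemma inPL_lmeet x y : inPL m x -> inPL m y -> inPL m (lmeet x y).
Proof.
by move=> [a [le_am ->]] [b [le_bm ->]]; rewrite lmeet_frac; apply: inPL_frac; lia.
Qed.

Lemma inPL_ljoin x y : inPL m x -> inPL m y -> inPL m (ljoin x y).
Proof.
by move=> [a [le_am ->]] [b [le_bm ->]]; rewrite ljoin_frac; apply: inPL_frac; lia.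
Qed.

Lemma inPL_lodot x y : inPL m x -> inPL m y -> inPL m (lodot x y).
Proof.
by move=> [a [le_am ->]] [b [le_bm ->]]; rewrite lodot_frac; apply: inPL_frac; lia.
Qed.

Lemma inPL_loplus x y : inPL m x -> inPL m y -> inPL m (loplus x y).
Proof.
by move=> [a [le_am ->]] [b [le_bm ->]]; rewrite loplus_frac; apply: inPL_frac; lia.
Qed.

End Fractions.

Lemma lodotC x y : lodot x y = lodot y x.
Proof. by rewrite /lodot (addrC x). Qed.

Lemma loplusC x y : loplus x y = loplus y x.
Proof. by rewrite /loplus (addrC x). Qed.

Lemma lodot0l x : x <= 1 -> lodot 0 x = 0.
Proof. by move=> x_le1; rewrite /lodot max_l //; lra. Qed.

Lemma lodot1l x : 0 <= x -> lodot 1 x = x.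
Proof. by move=> x_ge0; rewrite /lodot addrAC subrr add0r max_r. Qed.

Lemma loplus0l x : x <= 1 -> loplus 0 x = x.
Proof. by move=> x_le1; rewrite /loplus add0r min_r. Qed.

Lemma loplus1l x : 0 <= x -> loplus 1 x = 1.
Proof. by move=> x_ge0; rewrite /loplus min_l //; lra. Qed.

Lemma le_lodot2 x y x' y' : x <= x' -> y <= y' -> lodot x y <= lodot x' y'.
Proof. by move=> le_xx' le_yy'; apply: le_max2 => //; lra. Qed.

Lemma le_loplus2 x y x' y' : x <= x' -> y <= y' -> loplus x y <= loplus x' y'.
Proof. by move=> le_xx' le_yy'; apply: le_min2 => //; lra. Qed.

Definition ops_closed (R : rat * rat -> Prop) : Prop :=
  forall p q, R p -> R q ->
    [/\ R (pmeet p q), R (pjoin p q), R (podot p q) & R (poplus p q)].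

Section NonDiagonalSubalgebra.
Variables (n : nat) (R : rat * rat -> Prop).
Hypotheses (n_gt0 : (0 < n)%N) (R_closed : ops_closed R).

Lemma R_oplus_self i j : R (i%:R / n%:R, j%:R / n%:R) ->
  R ((minn n (i + i))%:R / n%:R, (minn n (j + j))%:R / n%:R).
Proof.
by move=> Rij; have [_ _ _] := R_closed Rij Rij; rewrite /poplus /= !loplus_frac.
Qed.

Lemma R_odot_self i j : R (i%:R / n%:R, j%:R / n%:R) ->
  R ((i + i - n)%N%:R / n%:R, (j + j - n)%N%:R / n%:R).
Proof.
by move=> Rij; have [_ _ + _] := R_closed Rij Rij; rewrite /podot /= !lodot_frac.
Qed.

Lemma R01_of_top i : (i < n)%N -> R (i%:R / n%:R, 1) -> R (0, 1).
Proof.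
elim/ltn_ind: i => i IH lt_in Ri1; have [i0|i_gt0] := posnP i.
  by rewrite i0 mul0r in Ri1.
have Rin : R (i%:R / n%:R, n%:R / n%:R) by rewrite frac_id.
apply: (IH (i + i - n)%N); [lia | lia |].
by move: (R_odot_self Rin); rewrite addnK frac_id.
Qed.

(* Doubling (when 2j <= n) or squaring (when n <= 2i) strictly widens the gap
   j - i; in the remaining case doubling reaches the top. *)
Lemma R01_of_lt i j : (i < j <= n)%N -> R (i%:R / n%:R, j%:R / n%:R) -> R (0, 1).
Proof.
have [d] := ubnP (n - (j - i)); elim: d i j => // d IH i j gap /andP[lt_ij le_jn] Rij.
have [jn|ne_jn] := eqVneq j n.
  move: Rij; rewrite jn frac_id //; have [->|i_gt0] := posnP i; first by rewrite mul0r.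
  by apply: R01_of_top; lia.
case: (leqP (j + j) n) => [le_2j_n|lt_n_2j].
  have le_2i_n : (i + i <= n)%N by lia.
  move: (R_oplus_self Rij); rewrite (minn_idPr le_2i_n) (minn_idPr le_2j_n).
  by apply: IH; lia.
case: (leqP n (i + i)) => [le_n_2i|lt_2i_n].
  by move: (R_odot_self Rij); apply: IH; lia.
move: (R_oplus_self Rij); rewrite (minn_idPl (ltnW lt_n_2j)) frac_id //.
by rewrite (minn_idPr (ltnW lt_2i_n)); apply: R01_of_top; lia.
Qed.

End NonDiagonalSubalgebra.

Lemma subuniv2_diagonal n (R : rat * rat -> Prop) :
  subuniv2 (prodPL n n) R -> (forall p, R p -> p.1 = p.2) ->
  exists A : rat -> Prop, subuniv1 (inPL n) A /\
    (forall p, R p <-> (A p.1 /\ p.2 = p.1)).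
Proof.
move=> [R_sub [R00 [R11 R_closed]]] R_diag; exists (fun x => R (x, x)); split.
  split; first by move=> x /R_sub[].
  by do 2!split=> //; move=> x y Rx Ry; have [] := R_closed _ _ Rx Ry.
by move=> [x z] /=; split=> [/[dup] /R_diag /= <- | [Rx ->]].
Qed.

Lemma R01_of_nondiagonal n (R : rat * rat -> Prop) : (0 < n)%N ->
  subuniv2 (prodPL n n) R -> (forall p, R p -> p.1 <= p.2) ->
  ~ (exists A : rat -> Prop, subuniv1 (inPL n) A /\
       (forall p, R p <-> (A p.1 /\ p.2 = p.1))) ->
  R (0, 1).
Proof.
move=> n_gt0 R_sub2 R_le R_nondiag.
have [[x z] Rxz ne_xz] : exists2 p, R p & p.1 != p.2.
  apply: NNPP => no_pair; apply/R_nondiag/subuniv2_diagonal => // p Rp.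
  by apply: NNPP => ne_p; apply: no_pair; exists p => //; apply/eqP.
have [R_sub [_ [_ R_closed]]] := R_sub2.
have [[i [le_in /= xE]] [j [le_jn /= zE]]] := R_sub _ Rxz; subst x z; rewrite /= in ne_xz.
apply: (R01_of_lt n_gt0 R_closed _ Rxz).
rewrite le_jn andbT -(ltr_frac n_gt0) lt_neqAle ne_xz.
exact: R_le Rxz.
Qed.

Lemma ex_least_nat (P : nat -> Prop) : (exists m, P m) ->
  exists2 m, P m & forall m', P m' -> (m <= m')%N.
Proof.
move=> exP; have [m [[Pm m_least] _]] :=
  dec_inh_nat_subset_has_unique_least_element P (fun m => classic (P m)) exP.
by exists m => // m' /m_least /ssrnat.leP.
Qed.

(* (0, z) = (u, z) ∧ (0, 1),  (x0, z) = (x0, y0) ∨ (0, z)  and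
   (x, z) = ((x, w) ∨ (0, z)) ∧ (x0, z). *)
Lemma ops_closed_widen (R : rat * rat -> Prop) x0 y0 x z w u :
  ops_closed R -> R (0, 1) -> R (x0, y0) -> R (x, w) -> R (u, z) ->
  0 <= x <= x0 -> y0 <= z <= 1 -> 0 <= u -> R (x, z).
Proof.
move=> R_closed R01 Rxy0 Rxw Ruz /andP[x_ge0 le_x_x0] /andP[le_y0_z z_le1] u_ge0.
have R0z : R (0, z).
  by have [+ _ _ _] := R_closed _ _ Ruz R01; rewrite /pmeet /lmeet /= min_r // min_l.
have Rx0z : R (x0, z).
  have [_ + _ _] := R_closed _ _ Rxy0 R0z; rewrite /pjoin /ljoin /= max_l ?max_r //.
  exact: le_trans le_x_x0.
have Rxwz : R (x, Num.max w z).
  by have [_ + _ _] := R_closed _ _ Rxw R0z; rewrite /pjoin /ljoin /= max_l.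
have [+ _ _ _] := R_closed _ _ Rxwz Rx0z.
by rewrite /pmeet /lmeet /= min_l // min_r // le_max lexx orbT.
Qed.

Definition least_in_fiber (k k' : nat) (R : rat * rat -> Prop) (i : nat) (z : rat) :=
  [/\ inPL k' z, R (i%:R / k%:R, z) &
      forall z', inPL k' z' -> R (i%:R / k%:R, z') -> z <= z'].

Section ConeUnionOfSubalgebra.
Variables (k k' : nat) (R : rat * rat -> Prop).
Hypotheses (k_gt0 : (0 < k)%N) (k'_gt0 : (0 < k')%N) (R_closed : ops_closed R).
Hypotheses (R00 : R (0, 0)) (R01 : R (0, 1)) (R_le : forall p, R p -> p.1 <= p.2).
Hypothesis R_proj : forall x z,
  ((exists z', R (x, z')) /\ (exists x', R (x', z))) <-> prodPL k k' (x, z).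

Lemma R_sub p : R p -> prodPL k k' p.
Proof. by case: p => x z Rxz; apply/R_proj; split; [exists z | exists x]. Qed.

Lemma R_cone x0 y0 p : R (x0, y0) -> prodPL k k' p -> p.1 <= x0 -> y0 <= p.2 -> R p.
Proof.
case: p => x z Rxy0 [/= Sx Sz] /= le_x_x0 le_y0_z.
have [[w Rxw] _] := proj2 (R_proj x 0) (conj Sx (inPL0 k')).
have [_ [u Ruz]] := proj2 (R_proj 0 z) (conj (inPL0 k) Sz).
have [/andP[x_ge0 _] /andP[_ z_le1]] := (inPL_bound Sx, inPL_bound Sz).
have [/inPL_bound/andP[u_ge0 _] _] := R_sub Ruz.
apply: (ops_closed_widen R_closed R01 Rxy0 Rxw Ruz) => //.
  by rewrite x_ge0.
by rewrite le_y0_z.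
Qed.

Lemma ex_least_in_fiber i : (i <= k)%N -> exists z, least_in_fiber k k' R i z.
Proof.
move=> le_ik; have [[z0 Rz0] _] := proj2 (R_proj (i%:R / k%:R) 0)
  (conj (inPL_frac le_ik) (inPL0 k')).
have [_ [m0 [le_m0 /= z0E]]] := R_sub Rz0; subst z0.
have [m [le_m Rm] m_least] := @ex_least_nat
  (fun m => (m <= k')%N /\ R (i%:R / k%:R, m%:R / k'%:R))
  (ex_intro _ m0 (conj le_m0 Rz0)).
exists (m%:R / k'%:R); split=> //; first exact: inPL_frac.
by move=> _ [m' [le_m' ->]] Rm'; rewrite ler_frac //; exact: m_least (conj le_m' Rm').
Qed.

Variable y : nat -> rat.
Hypothesis y_least : forall i, (i <= k)%N -> least_in_fiber k k' R i (y i).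

Lemma least_in_fiber0 : y 0%N = 0.
Proof.
have [/inPL_bound/andP[y0_ge0 _] _ y0_least] := y_least (leq0n k).
apply/le_anti; rewrite y0_ge0 andbT; apply: y0_least; first exact: inPL0.
by rewrite mul0r.
Qed.

Lemma least_in_fiber_top : y k = 1.
Proof.
have [/inPL_bound/andP[_ yk_le1] Rky _] := y_least (leqnn k).
by apply/le_anti; rewrite yk_le1 -(frac_id k_gt0) (R_le Rky).
Qed.

Lemma R_eq_Cunion p : R p <-> Cunion (prodPL k k') k y p.
Proof.
case: p => x z; split=> [Rxz | [i le_ik [Sxz [le_xi le_yz]]]]; last first.
  by have [_ Riy _] := y_least le_ik; apply: R_cone Riy Sxz le_xi le_yz.
have [[i [le_ik /= xE]] Sz] := R_sub Rxz; subst x.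
have [_ _ yi_least] := y_least le_ik.
by exists i => //; split; [exact: R_sub | split=> //=; apply: yi_least].
Qed.

End ConeUnionOfSubalgebra.

Definition cwop (f : rat -> rat -> rat) (p q : rat * rat) : rat * rat :=
  (f p.1 q.1, f p.2 q.2).

Lemma Cunion_widen S k y (p q : rat * rat) : Cunion S k y p -> S q ->
  q.1 <= p.1 -> p.2 <= q.2 -> Cunion S k y q.
Proof.
move=> [i le_ik [_ [le_p1 le_p2]]] Sq le_qp1 le_pq2; exists i => //.
by split; [| split; [exact: le_trans le_p1 | exact: le_trans le_pq2]].
Qed.

Lemma symmetric_pair_cases k (P : nat -> nat -> Prop) :
  (forall i j, P i j -> P j i) -> (forall j, (j <= k)%N -> P 0%N j /\ P k j) ->
  (forall i j, (0 < i < k)%N -> (0 < j < k)%N -> P i j) ->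
  forall i j, (i <= k)%N -> (j <= k)%N -> P i j.
Proof.
move=> P_sym P_bd P_in i j le_ik le_jk.
have [i0|i_gt0] := posnP i; first by rewrite i0; case: (P_bd j le_jk).
have [ik|ne_ik] := eqVneq i k; first by rewrite ik; case: (P_bd j le_jk).
have [j0|j_gt0] := posnP j; first by rewrite j0; apply: P_sym; case: (P_bd i le_ik).
have [jk|ne_jk] := eqVneq j k; first by rewrite jk; apply: P_sym; case: (P_bd i le_ik).
by apply: P_in; lia.
Qed.

Section ConeUnion.
Variables (k k' : nat) (y : nat -> rat).
Hypotheses (k_gt0 : (0 < k)%N) (k'_gt0 : (0 < k')%N).
Hypothesis y_in : forall i, (i <= k)%N -> inPL k' (y i).
Hypothesis y_mono : forall i j, (i <= j)%N -> (j <= k)%N -> y i <= y j.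
Hypotheses (y0 : y 0%N = 0) (yk : y k = 1).

Local Notation C := (Cunion (prodPL k k') k y).
Local Notation g i := (i%:R / k%:R, y i).

Lemma Cunion_gen i : (i <= k)%N -> C (g i).
Proof.
by move=> le_ik; exists i => //; split; [split; [exact: inPL_frac | exact: y_in] |].
Qed.

Lemma Cunion00 : C (0, 0).
Proof. by have := Cunion_gen (leq0n k); rewrite mul0r y0. Qed.

Lemma Cunion11 : C (1, 1).
Proof. by have := Cunion_gen (leqnn k); rewrite frac_id // yk. Qed.

Lemma Cunion_cwop f :
  (forall x z x' z', x <= x' -> z <= z' -> f x z <= f x' z') ->
  (forall x z, inPL k x -> inPL k z -> inPL k (f x z)) ->
  (forall x z, inPL k' x -> inPL k' z -> inPL k' (f x z)) ->
  (forall i j, (i <= k)%N -> (j <= k)%N -> C (cwop f (g i) (g j))) ->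
  forall p q, C p -> C q -> C (cwop f p q).
Proof.
move=> f_mono f_k f_k' C_gen p q [i le_ik [[Sp1 Sp2] [le_p1 le_p2]]].
move=> [j le_jk [[Sq1 Sq2] [le_q1 le_q2]]].
apply: (Cunion_widen (C_gen i j le_ik le_jk)); try exact: f_mono.
by split; [exact: f_k | exact: f_k'].
Qed.

Lemma cwop_lmeet_gen i j : (i <= k)%N -> (j <= k)%N ->
  cwop lmeet (g i) (g j) = g (minn i j).
Proof.
move=> le_ik le_jk; rewrite /cwop /= lmeet_frac // /lmeet.
case: (leqP i j) => [le_ij|/ltnW le_ji].
  by rewrite min_l ?y_mono // (minn_idPl le_ij).
by rewrite min_r ?y_mono // (minn_idPr le_ji).
Qed.

Lemma cwop_ljoin_gen i j : (i <= k)%N -> (j <= k)%N ->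
  cwop ljoin (g i) (g j) = g (maxn i j).
Proof.
move=> le_ik le_jk; rewrite /cwop /= ljoin_frac // /ljoin.
case: (leqP i j) => [le_ij|/ltnW le_ji].
  by rewrite max_r ?y_mono // (maxn_idPr le_ij).
by rewrite max_l ?y_mono // (maxn_idPl le_ji).
Qed.

Lemma gen_bound i : (i <= k)%N ->
  (0 <= (i%:R / k%:R : rat) <= 1) /\ (0 <= y i <= 1).
Proof. by move=> le_ik; split; apply: inPL_bound; [exact: inPL_frac | exact: y_in]. Qed.

Lemma Cunion_lodot_gen :
  (forall i j, (0 < i < k)%N -> (0 < j < k)%N -> C (cwop lodot (g i) (g j))) ->
  forall i j, (i <= k)%N -> (j <= k)%N -> C (cwop lodot (g i) (g j)).
Proof.
move=> C_in; apply: symmetric_pair_cases => // [i j|j le_jk].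
  by rewrite /cwop lodotC (lodotC (y i)).
have [/andP[gj_ge0 gj_le1] /andP[yj_ge0 yj_le1]] := gen_bound le_jk.
rewrite /cwop /= mul0r y0 frac_id // yk !lodot0l // !lodot1l //.
by split; [exact: Cunion00 | exact: Cunion_gen].
Qed.

Lemma Cunion_loplus_gen :
  (forall i j, (0 < i < k)%N -> (0 < j < k)%N -> C (cwop loplus (g i) (g j))) ->
  forall i j, (i <= k)%N -> (j <= k)%N -> C (cwop loplus (g i) (g j)).
Proof.
move=> C_in; apply: symmetric_pair_cases => // [i j|j le_jk].
  by rewrite /cwop loplusC (loplusC (y i)).
have [/andP[gj_ge0 gj_le1] /andP[yj_ge0 yj_le1]] := gen_bound le_jk.
rewrite /cwop /= mul0r y0 frac_id // yk !loplus0l // !loplus1l //.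
by split; [exact: Cunion_gen | exact: Cunion11].
Qed.

Lemma Cunion_subuniv2 :
  (forall i j, (0 < i < k)%N -> (0 < j < k)%N ->
     C (podot (g i) (g j)) /\ C (poplus (g i) (g j))) ->
  subuniv2 (prodPL k k') C.
Proof.
move=> C_in; split; first by move=> p [i _ []].
split; first exact: Cunion00.
split; first exact: Cunion11.
move=> p q Cp Cq; split.
- apply: (Cunion_cwop le_min2 (@inPL_lmeet _ k_gt0) (@inPL_lmeet _ k'_gt0)) => //.
  move=> i j le_ik le_jk; rewrite cwop_lmeet_gen //.
  by apply: Cunion_gen; rewrite geq_min le_ik.
- apply: (Cunion_cwop le_max2 (@inPL_ljoin _ k_gt0) (@inPL_ljoin _ k'_gt0)) => //.
  move=> i j le_ik le_jk; rewrite cwop_ljoin_gen //.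
  by apply: Cunion_gen; rewrite geq_max le_ik.
- apply: (Cunion_cwop le_lodot2 (@inPL_lodot _ k_gt0) (@inPL_lodot _ k'_gt0)) => //.
  by apply: Cunion_lodot_gen => i j lt_i lt_j; case: (C_in i j lt_i lt_j).
- apply: (Cunion_cwop le_loplus2 (@inPL_loplus _ k_gt0) (@inPL_loplus _ k'_gt0)) => //.
  by apply: Cunion_loplus_gen => i j lt_i lt_j; case: (C_in i j lt_i lt_j).
Qed.

End ConeUnion.

Theorem proposition3p12 (n k k' : nat) :
  (1 <= n)%N -> (k %| n)%N -> (k' %| n)%N ->
  (forall R : rat * rat -> Prop,
     subuniv2 (prodPL n n) R ->
     (forall p, R p -> p.1 <= p.2) ->
     ~ (exists A : rat -> Prop, subuniv1 (inPL n) A /\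
          (forall p, R p <-> (A p.1 /\ p.2 = p.1))) ->
     (forall x z, ((exists z', R (x, z')) /\ (exists x', R (x', z))) <->
                  prodPL k k' (x, z)) ->
     exists y : nat -> rat,
       (forall i, (i <= k)%N ->
          [/\ inPL k' (y i), R (i%:R / k%:R, y i) &
              forall z, inPL k' z -> R (i%:R / k%:R, z) -> y i <= z]) /\
       y 0%N = 0 /\ y k = 1 /\
       (forall p, R p <-> Cunion (prodPL k k') k y p)) /\
  (forall y : nat -> rat,
     (forall i, (i <= k)%N -> inPL k' (y i)) ->
     (forall i j, (i <= j)%N -> (j <= k)%N -> y i <= y j) ->
     y 0%N = 0 -> y k = 1 ->
     (forall i, (1 <= i)%N -> (i <= k.-1)%N -> i%:R / k%:R <= y i) ->
     (subuniv2 (prodPL k k') (Cunion (prodPL k k') k y) <->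
      (forall i j, (1 <= i)%N -> (i <= k.-1)%N -> (1 <= j)%N -> (j <= k.-1)%N ->
         Cunion (prodPL k k') k y (podot (i%:R / k%:R, y i) (j%:R / k%:R, y j)) /\
         Cunion (prodPL k k') k y (poplus (i%:R / k%:R, y i) (j%:R / k%:R, y j))))).
Proof.
move=> n_gt0 dvd_kn dvd_k'n.
have [k_gt0 k'_gt0] := (dvdn_gt0 n_gt0 dvd_kn, dvdn_gt0 n_gt0 dvd_k'n).
split=> [R R_sub2 R_le R_nondiag R_proj | y y_in y_mono y0 yk _].
- have R01 := R01_of_nondiagonal n_gt0 R_sub2 R_le R_nondiag.
  have [_ [R00 [_ R_closed]]] := R_sub2.
  have [y y_least] : exists y : nat -> rat,
      forall i, (i <= k)%N -> least_in_fiber k k' R i (y i).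
    apply: (choice (fun i z => (i <= k)%N -> least_in_fiber k k' R i z)) => i.
    have [/(ex_least_in_fiber k'_gt0 R_proj) [z]|] := leqP i k; first by exists z.
    by rewrite ltnNge => /negP nle_ik; exists 0.
  exists y; split; first exact: y_least.
  split; first exact: (least_in_fiber0 R00 y_least).
  split; first exact: (least_in_fiber_top k_gt0 R_le y_least).
  exact: (R_eq_Cunion R_closed R01 R_proj y_least).
- split=> [[_ [_ [_ C_closed]]] i j i_ge1 i_lt j_ge1 j_lt | C_in].
    have gen l : (l <= k.-1)%N -> Cunion (prodPL k k') k y (l%:R / k%:R, y l).
      by move=> le_l; apply: (Cunion_gen y_in); lia.
    by have [_ _ ? ?] := C_closed _ _ (gen i i_lt) (gen j j_lt).
  apply: Cunion_subuniv2 => // i j /andP[i_gt0 lt_ik] /andP[j_gt0 lt_jk].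
  by apply: C_in; lia.
Qed.
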